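(* Let $k\ge1$ be an integer. For the class of $k$-well-structured instances of one-sided matching (with unrestricted nonnegative valuations), the algorithm $k$-FMM makes $k$ value queries per agent and has distortion $O(k\cdot n^{1/k})$.
   Context: One-sided matching: there is a set $N$ of $n$ agents and a set $A$ of $n$ items. Each agent $i$ has a valuation function $v_i:A\to\mathbb{R}_{\ge0}$. Agents report strict rankings $\succ_i$ consistent with their values (if $a\succ_i b$ then $v_i(a)\ge v_i(b)$). Value queries return $v_i(j)$. A matching is a bijection $N\to A$ with welfare $\mathrm{SW}(Y\mid\mathbf v)=\sum_i v_i(y_i)$. The distortion of an algorithm on a class of instances is the supremum over instances in the class of optimal welfare divided by the welfare of the algorithm's output. $k$-well-structured ($k$-WS) instance: fix a constant $\varepsilon\in(0,1)$. The items are partitioned into $A_1,\dots,A_{k+1}$ with $|A_1|=1$ and $|A_\ell|=\varepsilon n^{(\ell-1)/k}$ for $\ell=2,\dots,k$ (assumed integers), and $A_{k+1}$ the remaining items. Every agent ranks all items of $A_\ell$ above all items of $A_{\ell+1}$ for each $\ell$. The order within each $A_\ell$ may differ across agents. The partition is known to the algorithm. Algorithm $k$-FMM: for each $\ell=1,\dots,k$ and each agent $i$, query $i$'s value $u_i(\ell)$ for her least-preferred item in $A_\ell$. Define $\tilde v_i(j)=u_i(\ell)$ for $j\in A_\ell$ with $\ell\le k$, and $\tilde v_i(j)=0$ for $j\in A_{k+1}$. Output a matching maximizing $\sum_i\tilde v_i(y_i)$. *)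

From HB Require Import structures.
From mathcomp Require Import all_boot all_order all_algebra.
From mathcomp Require Import fingroup perm reals exp.
Set Implicit Arguments. Unset Strict Implicit. Unset Printing Implicit Defensive.
Import Order.TTheory GRing.Theory Num.Theory.
Local Open Scope ring_scope.

(* Agents and items are both 'I_n.  A valuation profile is v : 'I_n -> 'I_n -> R
   (v i j = value of agent i for item j).  A matching is a bijection agents -> items,
   i.e. a permutation Y : {perm 'I_n}; agent i gets item Y i. *)

Section Defs.
Variable R : realType.
Variable n : nat.

Definition SW (v : 'I_n -> 'I_n -> R) (Y : {perm 'I_n}) : R :=
  \sum_(i < n) v i (Y i).

(* A strict ranking of agent i is given by a position function rk : {perm 'I_n};
   a >_i b  iff  rk a < rk b  (smaller position = more preferred). *)
Definition prefers (rk : {perm 'I_n}) (a b : 'I_n) : bool := (rk a < rk b)%N.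

Definition consistent (rk : {perm 'I_n}) (w : 'I_n -> R) : Prop :=
  forall a b, prefers rk a b -> w b <= w a.

Definition least_pref (rk : {perm 'I_n}) (P : pred 'I_n) : option 'I_n :=
  [pick j | P j & [forall j', P j' ==> (rk j' <= rk j)%N]].

Variable k : nat.

(* The partition A_1, ..., A_{k+1} is encoded by part : 'I_n -> 'I_k.+1,
   item j lies in A_{part j + 1}  (so index 0 is A_1 and index k is A_{k+1}). *)

Definition k_WS (eps : R) (part : 'I_n -> 'I_k.+1)
    (rk : 'I_n -> {perm 'I_n}) : Prop :=
  [/\ #|[set j | part j == ord0]| = 1%N,
      (forall l : 'I_k.+1, (0 < l < k)%N ->
         (#|[set j | part j == l]|)%:R = eps * powR (n%:R) (l%:R / k%:R))
    & (forall i a b, (part a < part b)%N -> prefers (rk i) a b)].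

(* k-FMM: query u_i(l) = value of agent i for her least-preferred item of A_l,
   l = 1..k (index l-1 = 0..k-1).  That is exactly k value queries per agent. *)
Definition FMM_query (v : 'I_n -> 'I_n -> R) (part : 'I_n -> 'I_k.+1)
    (rk : 'I_n -> {perm 'I_n}) (i : 'I_n) (l : 'I_k.+1) : R :=
  if least_pref (rk i) (fun j => part j == l) is Some j then v i j else 0.

Definition FMM_proxy (v : 'I_n -> 'I_n -> R) (part : 'I_n -> 'I_k.+1)
    (rk : 'I_n -> {perm 'I_n}) (i j : 'I_n) : R :=
  if (part j < k)%N then FMM_query v part rk i (part j) else 0.

(* Y is a possible output of k-FMM: a matching maximizing the proxy welfare
   (any tie-breaking). *)
Definition FMM_output (v : 'I_n -> 'I_n -> R) (part : 'I_n -> 'I_k.+1)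
    (rk : 'I_n -> {perm 'I_n}) (Y : {perm 'I_n}) : Prop :=
  forall Y' : {perm 'I_n}, SW (FMM_proxy v part rk) Y' <= SW (FMM_proxy v part rk) Y.

End Defs.

(* Let w~ be the proxy valuations of k-FMM, Y its output (a matching maximising
   the proxy welfare A = SW(Y | w~)) and X any matching.  Each query returns the
   value of the least preferred item of its part, so w~ <= v and A <= SW(Y | v).
   To an item j of the part A_l associate its reference part G(j) = A_{l-1}
   (A_1 itself when l = 1): every agent likes every item of G(j) at least as
   much as j, and her proxy valuation is constant on G(j).  An exchange argument
   on the proxy-optimal matching Y shows that whenever w~_a is constant equal to
   c on a set G of items, |G| c <= |G| w~_a(Y a) + A.  Hence
   v_a(j) <= w~_a(Y a) + A / |G(j)|, and summing along X gives
   SW(X | v) <= A (1 + sum_j 1 / |G(j)|).  The size constraints of k-WS give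
   |A_{l+1}| <= (n^{1/k} / eps) |A_l|, so this harmonic sum is at most
   1 + k n^{1/k} / eps, and the theorem follows with C = 3 / eps. *)

From HB Require Import structures.
From mathcomp Require Import all_boot all_order all_algebra.
From mathcomp Require Import fingroup perm reals exp.
From mathcomp Require Import ring lra zify.
Set Implicit Arguments. Unset Strict Implicit. Unset Printing Implicit Defensive.
Import Order.TTheory GRing.Theory Num.Theory.
Local Open Scope ring_scope.

Lemma least_prefP (n : nat) (rk : {perm 'I_n}) (P : pred 'I_n) (j0 : 'I_n) :
  P j0 -> exists2 js, least_pref rk P = Some js &
    P js /\ forall j, P j -> (rk j <= rk js)%N.
Proof.
move=> Pj0; rewrite /least_pref; case: pickP => [js /andP[Pjs /forallP least] | none].
  by exists js => //; split => // j Pj; have := least j; rewrite Pj.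
have [j Pj jmax] := arg_maxnP (fun j => rk j) Pj0.
have /negP[] := negbT (none j); rewrite Pj /=.
by apply/forallP => j'; apply/implyP => /jmax.
Qed.

Section OptimalMatching.
Variables (R : realType) (n : nat) (w : 'I_n -> 'I_n -> R).

Lemma SW_swap (Y : {perm 'I_n}) (i i' : 'I_n) : i != i' ->
  SW w (Y * tperm (Y i) (Y i'))%g + w i (Y i) + w i' (Y i') =
  SW w Y + w i (Y i') + w i' (Y i).
Proof.
move=> ii'; rewrite /SW (bigD1 i) //= (bigD1 i') 1?eq_sym //=.
rewrite [in RHS](bigD1 i) //= [in RHS](bigD1 i') 1?eq_sym //=.
rewrite !permM tpermL tpermR.
under eq_bigr => x /andP[xi xi'] do
  rewrite permM tpermD ?(inj_eq perm_inj) 1?eq_sym ?(inj_eq perm_inj) //.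
lra.
Qed.

Lemma SW_items (Y : {perm 'I_n}) : SW w Y = \sum_j w ((Y^-1)%g j) j.
Proof.
rewrite /SW (reindex_inj (h := (Y^-1)%g) perm_inj) /=.
by apply: eq_bigr => j _; rewrite permKV.
Qed.

Hypothesis w_ge0 : forall i j, 0 <= w i j.
Variable Y : {perm 'I_n}.
Hypothesis Y_opt : forall Y', SW w Y' <= SW w Y.

(* Optimality of Y against the swap of i with the current owner of j. *)
Lemma exchange_le (i j : 'I_n) : w i j <= w i (Y i) + w ((Y^-1)%g j) j.
Proof.
set i' := (Y^-1)%g j; have Yi' : Y i' = j by rewrite permKV.
have [<-|ii'] := eqVneq i i'; first by rewrite -Yi'; have := w_ge0 i (Y i); lra.
have := SW_swap Y ii'; have := Y_opt (Y * tperm (Y i) (Y i'))%g.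
rewrite Yi'; have := w_ge0 i' (Y i); lra.
Qed.

Lemma exchange_bound (i : 'I_n) (G : {set 'I_n}) (c : R) :
  (forall j, j \in G -> w i j = c) -> #|G|%:R * c <= #|G|%:R * w i (Y i) + SW w Y.
Proof.
move=> wc; rewrite SW_items !mulr_natl -!sumr_const.
apply: (@le_trans _ _ (\sum_(j in G) (w i (Y i) + w ((Y^-1)%g j) j))).
  by apply: ler_sum => j Gj; rewrite -(wc j Gj) exchange_le.
rewrite big_split lerD2l /= [X in _ <= X](bigID [in G]) /= lerDl.
by apply: sumr_ge0 => j _.
Qed.

End OptimalMatching.

Section Proxy.
Variables (R : realType) (n k : nat) (v : 'I_n -> 'I_n -> R).
Variables (part : 'I_n -> 'I_k.+1) (rk : 'I_n -> {perm 'I_n}).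
Hypothesis v_ge0 : forall i j, 0 <= v i j.

Lemma query_ge0 (a : 'I_n) (l : 'I_k.+1) : 0 <= FMM_query v part rk a l.
Proof. by rewrite /FMM_query; case: least_pref. Qed.

Lemma proxy_ge0 (a j : 'I_n) : 0 <= FMM_proxy v part rk a j.
Proof. by rewrite /FMM_proxy; case: ifP => // _; exact: query_ge0. Qed.

(* The query of part l returns the value of some item of part l, so it is at
   least any value dominated by all items of that part. *)
Lemma query_ge (a j : 'I_n) (l : 'I_k.+1) :
  [exists j0, part j0 == l] -> (forall j', part j' == l -> v a j <= v a j') ->
  v a j <= FMM_query v part rk a l.
Proof.
move=> /existsP[j0 lj0] dom; rewrite /FMM_query.
by have [js -> [ljs _]] := @least_prefP _ (rk a) (fun j' => part j' == l) _ lj0; exact: dom.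
Qed.

Hypothesis v_consistent : forall i, consistent (rk i) (v i).

(* The query of part l returns the value of the least preferred item of the part. *)
Lemma query_le (a j : 'I_n) : FMM_query v part rk a (part j) <= v a j.
Proof.
rewrite /FMM_query.
have [js -> [_ least]] :=
  @least_prefP _ (rk a) (fun j' => part j' == part j) _ (eqxx (part j)).
have := least j (eqxx _); rewrite leq_eqVlt => /orP[/eqP/val_inj/perm_inj ->|ljs] //.
exact: v_consistent.
Qed.

Lemma proxy_le (a j : 'I_n) : FMM_proxy v part rk a j <= v a j.
Proof. by rewrite /FMM_proxy; case: ifP => _; [exact: query_le | exact: v_ge0]. Qed.

End Proxy.

Definition part_size (n k : nat) (part : 'I_n -> 'I_k.+1) (l : 'I_k.+1) : nat :=
  #|[set j | part j == l]|.

(* Reference part of an item in part l: the part just above it, or A_1 itself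
   for the items of A_1.  Its size controls how much value k-FMM may lose. *)
Definition ref_part (k : nat) (l : 'I_k.+1) : 'I_k.+1 := inord l.-1.

Lemma ref_partE (k : nat) (l : 'I_k.+1) : ref_part l = l.-1 :> nat.
Proof. by rewrite inordK // (leq_ltn_trans (leq_pred _) (ltn_ord l)). Qed.

Lemma ref_part_lt (k : nat) (l : 'I_k.+1) : (1 <= k)%N -> (ref_part l < k)%N.
Proof. by rewrite ref_partE; have := ltn_ord l; lia. Qed.

Section WellStructured.
Variables (R : realType) (eps : R) (n k : nat).
Variables (part : 'I_n -> 'I_k.+1) (rk : 'I_n -> {perm 'I_n}).
Hypotheses (eps01 : 0 < eps < 1) (k_ge1 : (1 <= k)%N) (hWS : k_WS eps part rk).

Local Notation size := (part_size part).
Local Notation N := (powR (n%:R : R) k%:R^-1).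

(* A_1 is a singleton, so there is at least one item. *)
Lemma n_gt0 : (0 < n)%N.
Proof.
by case: hWS => A1 _ _; rewrite -[n]card_ord -A1 max_card.
Qed.

Lemma part_size_lb (l : 'I_k.+1) :
  (l < k)%N -> eps * powR n%:R (l%:R / k%:R) <= (size l)%:R.
Proof.
case: hWS => A1 Amid _ lk; have [e0 e1] := andP eps01.
have [l0|l_gt0] := posnP l; last by rewrite /part_size Amid ?l_gt0.
rewrite (_ : l = ord0); last exact: val_inj.
by rewrite /part_size A1 /= mul0r powRr0 mulr1; lra.
Qed.

Lemma part_size_gt0 (l : 'I_k.+1) : (l < k)%N -> (0 < size l)%N.
Proof.
move=> /part_size_lb; rewrite -(ltr0n R); apply: lt_le_trans.
by rewrite mulr_gt0 ?powR_gt0 ?ltr0n ?n_gt0 //; case/andP: eps01.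
Qed.

Lemma part_size_ub (l : 'I_k.+1) : (size l)%:R <= powR (n%:R : R) (l%:R / k%:R).
Proof.
case: hWS => A1 Amid _; have [e0 e1] := andP eps01.
have [l0|l_gt0] := posnP l.
  by rewrite (_ : l = ord0) ?/part_size ?A1 /= ?mul0r ?powRr0 //; exact: val_inj.
have := ltn_ord l; rewrite ltnS leq_eqVlt => /orP[/eqP lk|lk].
  rewrite lk divff ?powRr1 ?ler0n ?pnatr_eq0 -?lt0n -?lk // ler_nat.
  by rewrite -[X in (_ <= X)%N](card_ord n) max_card.
rewrite /part_size Amid ?l_gt0 //.
by have := powR_ge0 (n%:R : R) (l%:R / k%:R); nra.
Qed.

Lemma part_size_ratio (l : 'I_k.+1) : (0 < l)%N ->
  eps * (size l)%:R <= N * (size (ref_part l))%:R.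
Proof.
move=> l_gt0; have lb := part_size_lb (ref_part_lt l k_ge1).
have ub := part_size_ub l; rewrite ref_partE in lb.
have split_exp : (l%:R / k%:R : R) = l.-1%:R / k%:R + k%:R^-1.
  by rewrite -{1}(prednK l_gt0) -natr1 mulrDl mul1r.
rewrite split_exp powRD ?pnatr_eq0 -?lt0n ?n_gt0 ?implybT // in ub.
have [e0 e1] := andP eps01.
have := powR_ge0 (n%:R : R) k%:R^-1; have := powR_ge0 (n%:R : R) (l.-1%:R / k%:R).
nra.
Qed.

(* Every agent values any item at most as much as any item of its reference part:
   the reference part is ranked above it, or is the singleton A_1 containing it. *)
Lemma ref_part_preferred (v : 'I_n -> 'I_n -> R) (a j j' : 'I_n) :
  consistent (rk a) (v a) -> part j' == ref_part (part j) -> v a j <= v a j'.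
Proof.
move=> cons /eqP j'ref; case: hWS => A1 _ ranked.
have [pj0|pj_gt0] := posnP (part j).
  have ref0 : ref_part (part j) = ord0 by apply: val_inj; rewrite /= ref_partE pj0.
  have /cards1P[x A1x] : #|[set i | part i == ord0]| == 1%N by rewrite A1.
  have : j \in [set i | part i == ord0] by rewrite inE; apply/eqP/val_inj.
  have : j' \in [set i | part i == ord0] by rewrite inE j'ref ref0.
  by rewrite A1x !inE => /eqP -> /eqP ->.
by apply: cons; apply: ranked; rewrite j'ref ref_partE ltn_predL.
Qed.

Lemma harmonic_ref_part :
  \sum_j ((size (ref_part (part j)))%:R : R)^-1 <= 1 + k%:R * (N / eps).
Proof.
have [e0 e1] := andP eps01.
rewrite (partition_big part xpredT) //=.
have per_part l : \sum_(j | part j == l) ((size (ref_part (part j)))%:R : R)^-1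
    = (size l)%:R / (size (ref_part l))%:R.
  rewrite (eq_bigr (fun=> ((size (ref_part l))%:R : R)^-1)); last by move=> j /eqP ->.
  rewrite (eq_bigl [in [set j | part j == l]]); last by move=> j; rewrite inE.
  by rewrite sumr_const mulr_natl.
rewrite (eq_bigr _ (fun l _ => per_part l)) big_ord_recl /=.
rewrite (_ : ref_part ord0 = ord0); last by apply: val_inj; rewrite /= ref_partE.
rewrite divff ?pnatr_eq0 -?lt0n ?part_size_gt0 // lerD2l.
rewrite -[k in k%:R * _]card_ord mulr_natl -sumr_const.
apply: ler_sum => l _.
have ref_gt0 := part_size_gt0 (ref_part_lt (lift ord0 l) k_ge1).
rewrite ler_pdivrMr ?ltr0n // mulrAC ler_pdivlMr // mulrC.
exact: part_size_ratio.
Qed.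

End WellStructured.

Section Distortion.
Variables (R : realType) (eps : R) (n k : nat).
Variables (part : 'I_n -> 'I_k.+1) (rk : 'I_n -> {perm 'I_n}) (v : 'I_n -> 'I_n -> R).
Hypotheses (eps01 : 0 < eps < 1) (k_ge1 : (1 <= k)%N) (hWS : k_WS eps part rk).
Hypotheses (v_ge0 : forall i j, 0 <= v i j) (v_consistent : forall i, consistent (rk i) (v i)).
Variable Y : {perm 'I_n}.
Hypothesis Y_out : FMM_output v part rk Y.

Local Notation proxy := (FMM_proxy v part rk).
Local Notation ref_size j := ((part_size part (ref_part (part j)))%:R : R).

Lemma agent_bound (a j : 'I_n) : v a j <= proxy a (Y a) + SW proxy Y / ref_size j.
Proof.
set g := ref_part (part j); set G := [set j' | part j' == g].
have g_lt : (g < k)%N := ref_part_lt (part j) k_ge1.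
have G_gt0 : (0 < #|G|)%N := part_size_gt0 eps01 hWS g_lt.
have G_nonempty : [exists j0, part j0 == g].
  have /set0Pn[j0] : G != set0 by rewrite -card_gt0.
  by rewrite inE => ?; apply/existsP; exists j0.
have v_le_query : v a j <= FMM_query v part rk a g.
  by apply: query_ge G_nonempty _ => j' /(ref_part_preferred hWS); apply.
have proxy_flat j' : j' \in G -> proxy a j' = FMM_query v part rk a g.
  by rewrite inE => /eqP pj'; rewrite /FMM_proxy pj' g_lt.
have := exchange_bound (proxy_ge0 part rk v_ge0) Y_out proxy_flat.
rewrite -/(part_size part g) -/g => exch.
have s_gt0 : 0 < ref_size j by rewrite ltr0n.
rewrite -(ler_pM2l s_gt0) mulrDr mulrCA mulfV ?gt_eqF // mulr1.
by apply: le_trans exch; rewrite ler_wpM2l.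
Qed.

Lemma welfare_bound (X : {perm 'I_n}) :
  SW v X <= SW proxy Y * (1 + \sum_j (ref_size j)^-1).
Proof.
apply: (@le_trans _ _ (\sum_a (proxy a (Y a) + SW proxy Y / ref_size (X a)))).
  by apply: ler_sum => a _; exact: agent_bound.
rewrite big_split /= mulrDr mulr1 mulr_sumr lerD2l.
by rewrite [leRHS](reindex_inj (@perm_inj _ X)).
Qed.

End Distortion.

Theorem theorem3 (R : realType) (eps : R) :
  0 < eps < 1 ->
  exists C : R, 0 < C /\
    forall (k n : nat), (1 <= k)%N ->
    forall (part : 'I_n -> 'I_k.+1) (rk : 'I_n -> {perm 'I_n})
           (v : 'I_n -> 'I_n -> R),
      (forall i j, 0 <= v i j) ->
      (forall i, consistent (rk i) (v i)) ->
      k_WS eps part rk ->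
      forall Y : {perm 'I_n}, FMM_output v part rk Y ->
      forall X : {perm 'I_n},
        SW v X <= C * k%:R * powR (n%:R) (k%:R^-1) * SW v Y.
Proof.
move=> eps01; have [e0 e1] := andP eps01.
exists (3 / eps); split; first exact: divr_gt0.
move=> k n k_ge1 part rk v v_ge0 v_cons hWS Y Y_out X.
set A := SW (FMM_proxy v part rk) Y; set N := powR (n%:R : R) k%:R^-1.
have A_ge0 : 0 <= A by apply: sumr_ge0 => i _; exact: proxy_ge0.
have A_le : A <= SW v Y by apply: ler_sum => i _; exact: proxy_le.
have N_ge1 : 1 <= N.
  rewrite -(powRr0 (n%:R : R)) ler_powR ?ler1n ?invr_ge0 ?ler0n ?(n_gt0 hWS) //.
set t := k%:R * (N / eps).
have t_ge1 : 1 <= t.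
  have N_eps_ge1 : 1 <= N / eps by rewrite ler_pdivlMr //; lra.
  have k_ge1R : (1 : R) <= k%:R by rewrite ler1n.
  rewrite /t; nra.
have -> : 3 / eps * k%:R * N * SW v Y = 3 * t * SW v Y by rewrite /t; field; rewrite gt_eqF.
have harm := harmonic_ref_part eps01 k_ge1 hWS; rewrite -/N -/t in harm.
have := welfare_bound eps01 k_ge1 hWS v_ge0 v_cons Y_out X; rewrite -/A.
set S := \sum_j _ in harm *; move=> welfare.
(* SW(X | v) <= A (1 + S) <= A (2 + t) <= SW(Y | v) (2 + t) <= 3 t SW(Y | v). *)
have : 0 <= A * (1 + t - S) by apply: mulr_ge0 => //; lra.
have : 0 <= (SW v Y - A) * (2 + t) by apply: mulr_ge0; lra.
nra.
Qed.
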